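(* Let $X$ and $\varepsilon$ be independent real random variables and $Y=X+\varepsilon$. Suppose $P(X\in\{\xi_\ell\}_{\ell\in\mathbb{N}_0})=1$ for real numbers $\xi_0<\xi_1<\cdots$, $F_X\{\xi_0\}>0$, and there is $z_0\in\mathbb{R}$ with $F_\varepsilon(z_0)=0$. Choose $\{\zeta_\ell\}_{\ell\in\mathbb{N}_0}\subset\mathbb{R}$ with $\xi_\ell<\zeta_\ell\le\xi_{\ell+1}$ and $F_\varepsilon(z_0+\zeta_\ell-\xi_\ell)>0$ for each $\ell\in\mathbb{N}_0$. Define $p_X(\ell):=F_X\{\xi_\ell\}\mathbf 1_{\mathbb{N}_0}(\ell)$, $$\ddot P_{\varepsilon,+}(\ell,z):=\Big(\delta_{z,0}-\frac{F_\varepsilon(z_0+\zeta_\ell-\xi_{\ell-z})}{F_\varepsilon(z_0+\zeta_\ell-\xi_\ell)}\mathbf 1_{\{0,\dots,\ell\}}(z)\Big)\mathbf 1_{\mathbb{N}_0}(\ell),\qquad \ddot P_Y(\ell):=\frac{F_Y(z_0+\zeta_\ell)}{F_\varepsilon(z_0+\zeta_\ell-\xi_\ell)}\mathbf 1_{\mathbb{N}_0}(\ell).$$ Then $p_X(\ell)=\sum_{z\in\mathbb{Z}}\ddot P_Y(\ell-z)\,\beta\{\ddot P_{\varepsilon,+}\}(\ell,z)$ for all $\ell\in\mathbb{Z}$. In particular, if there exist $s>0$ and $0<\sigma\le s$ with $\xi_\ell=\xi_0+s\ell$ for all $\ell\in\mathbb{N}_0$ and $F_\varepsilon(z_0+\sigma)>0$,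 then, taking $\zeta_\ell:=\xi_0+\sigma+s\ell$ and $\ddot U_{\varepsilon,+}(z):=\ddot P_{\varepsilon,+}(z,z)$, $$F_X(\xi)=(\Theta\{\ddot P_Y\}*\Theta\{\gamma\{\ddot U_{\varepsilon,+}\}\})\Big(\frac{\xi-\xi_0}{s}\Big)\qquad(\xi\in\mathbb{R}).$$
   Context: $F_B$ is the distribution function of $B$, $F_B\{x\}:=P(B=x)$. $\delta_{z,0}=1$ if $z=0$, else $0$. For a double sequence $\ddot p(\ell,z)$ vanishing for $z<0$: $\ddot p^{*0}(\ell,z):=\delta_{z,0}$, $\ddot p^{*j}(\ell,z):=\sum_{z_1\in\mathbb{Z}}\ddot p(\ell,z_1)\ddot p^{*(j-1)}(\ell-z_1,z-z_1)$, and $\beta\{\ddot p\}(\ell,z):=\sum_{j=0}^{z}\ddot p^{*j}(\ell,z)$ (empty sum $=0$). For a single sequence $\ddot u$ vanishing on negative integers: $\ddot u^{*0}(z):=\delta_{z,0}$, $\ddot u^{*j}(z):=\sum_y\ddot u(z-y)\ddot u^{*(j-1)}(y)$, $\gamma\{\ddot u\}(z):=\sum_{j=0}^z\ddot u^{*j}(z)$. For a sequence $p$ vanishing on negative integers, $\Theta\{p\}(\xi):=\sum_{z=-\infty}^{\lfloor\xi\rfloor}p(z)$, and $(\Theta\{p\}*\Theta\{q\})(x):=\sum_{z\in\mathbb{Z}}\Theta\{p\}(x-z)q(z)$. *)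

From HB Require Import structures.
From mathcomp Require Import all_boot all_order all_algebra.
From mathcomp Require Import all_classical all_reals all_analysis.
Set Implicit Arguments. Unset Strict Implicit. Unset Printing Implicit Defensive.
Import Order.TTheory GRing.Theory Num.Theory.
Import numFieldNormedType.Exports.
Local Open Scope classical_set_scope.
Local Open Scope ring_scope.

Section Defs.
Variable R : realType.

Definition zsum (f : int -> R) : R :=
  limn (fun N : nat => \sum_(i < (2 * N).+1) f (i%:Z - N%:Z)).

Definition zsum_le (f : int -> R) (m : int) : R :=
  limn (fun N : nat => \sum_(i < N) f (m - i%:Z)).

Definition kdelta (z : int) : R := if z == 0 then 1 else 0.

Fixpoint dstar (p : int -> int -> R) (j : nat) (l z : int) : R :=
  match j with
  | 0 => kdelta z
  | j'.+1 => zsum (fun z1 => p l z1 * dstar p j' (l - z1) (z - z1))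
  end.

Definition beta (p : int -> int -> R) (l z : int) : R :=
  if (0 <= z) then \sum_(j < (absz z).+1) dstar p j l z else 0.

Fixpoint sstar (u : int -> R) (j : nat) (z : int) : R :=
  match j with
  | 0 => kdelta z
  | j'.+1 => zsum (fun y => u (z - y) * sstar u j' y)
  end.

Definition gamma (u : int -> R) (z : int) : R :=
  if (0 <= z) then \sum_(j < (absz z).+1) sstar u j z else 0.

Definition Theta (p : int -> R) (xi : R) : R := zsum_le p (Num.floor xi).

Definition Theta_conv (p q : int -> R) (x : R) : R :=
  zsum (fun z => Theta p (x - z%:~R) * q z).

End Defs.

Section Prob.
Context {d : measure_display} {T : measurableType d} {R : realType}.
Variable P : probability T R.

Definition distF (B : T -> R) (x : R) : R := fine (P [set w | B w <= x]).
Definition atomF (B : T -> R) (x : R) : R := fine (P [set w | B w = x]).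

Definition indep_RV (X Y : T -> R) : Prop :=
  forall A B : set R, measurable A -> measurable B ->
    P (X @^-1` A `&` Y @^-1` B) = (P (X @^-1` A) * P (Y @^-1` B))%E.
End Prob.

Section Objects.
Variable R : realType.
Variables (FX1 : R -> R) (Feps FY : R -> R) (xi zeta : nat -> R) (z0 : R).

Definition p_X (l : int) : R := if 0 <= l then FX1 (xi (absz l)) else 0.

Definition Peps_plus (l z : int) : R :=
  if 0 <= l then
    kdelta R z -
    (if (0 <= z) && (z <= l) then
       Feps (z0 + zeta (absz l) - xi (absz (l - z))) /
       Feps (z0 + zeta (absz l) - xi (absz l))
     else 0)
  else 0.

Definition P_Y (l : int) : R :=
  if 0 <= l then
    FY (z0 + zeta (absz l)) / Feps (z0 + zeta (absz l) - xi (absz l))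
  else 0.

Definition U_eps_plus (z : int) : R := Peps_plus z z.
End Objects.

From HB Require Import structures.
From mathcomp Require Import all_boot all_order all_algebra.
From mathcomp Require Import all_classical all_reals all_analysis.
From mathcomp Require Import zify ring lra.
Import Order.TTheory GRing.Theory Num.Theory.
Import numFieldNormedType.Exports.
Local Open Scope classical_set_scope.
Local Open Scope ring_scope.

(* Since eps puts no mass at or below z0 and zeta_n <= xi_(n+1), only the atoms
   xi_0, ..., xi_n of X contribute to F_Y(z0 + zeta_n):
     F_Y(z0 + zeta_n) = sum_(k <= n) F_X{xi_k} F_eps(z0 + zeta_n - xi_k).
   This is a lower triangular system for p_X with nonzero diagonal
   F_eps(z0 + zeta_n - xi_n); normalising the diagonal gives the recursion
   p_X(n) = P_Y(n) + sum_i P_eps+(n, i) p_X(n - i) with P_eps+(n, 0) = 0, whose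
   solution is the convolution of P_Y with the Neumann series beta{P_eps+}.
   On a lattice xi_l = xi_0 + s l the kernel P_eps+(k, z) depends only on z, so
   beta{P_eps+} collapses to gamma{U_eps+}, and summing p_X over the atoms
   below xi yields F_X as the convolution Theta{P_Y} * Theta{gamma{U_eps+}}. *)

Section IntSums.
Context {R : realType}.
Implicit Types (f : int -> R) (u : nat -> R).

Lemma limn_eventually_cst {u} {S : R} (M : nat) :
  (forall N, (M <= N)%N -> u N = S) -> limn u = S.
Proof. by move=> uS; apply: lim_near_cst => //; exists M => // N /= /uS. Qed.

Lemma big_ord_widen0 u m N : (m <= N)%N ->
  (forall i, (m <= i)%N -> (i < N)%N -> u i = 0) ->
  \sum_(i < N) u i = \sum_(i < m) u i.
Proof.
move=> mN u0; rewrite (big_ord_widen N u mN) [RHS]big_mkcond /=.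
by apply: eq_bigr => i _; case: ltnP => // /u0 ->.
Qed.

Lemma sumr_ord_rev u n : \sum_(i < n.+1) u i = \sum_(i < n.+1) u (n - i)%N.
Proof.
by rewrite (reindex_inj rev_ord_inj) /=; apply: eq_bigr => i _; rewrite subSS.
Qed.

Lemma zsum_finsupp f (n : nat) :
  (forall z, z < 0 -> f z = 0) -> (forall z, n%:Z < z -> f z = 0) ->
  zsum f = \sum_(i < n.+1) f i%:Z.
Proof.
move=> f_lt0 f_gtn; rewrite /zsum; apply: (limn_eventually_cst n) => N nN.
have -> : (2 * N).+1 = (N + (n.+1 + (N - n)))%N by lia.
rewrite big_split_ord /= big_split_ord /= big1 ?add0r; last first.
  by move=> i _; apply: f_lt0; have := ltn_ord i; lia.
rewrite [X in _ + X]big1 ?addr0; last by move=> i _; apply: f_gtn; lia.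
by apply: eq_bigr => i _; congr f; lia.
Qed.

Lemma zsum_eq0 f : (forall z, f z = 0) -> zsum f = 0.
Proof. by move=> f0; rewrite (@zsum_finsupp f 0) // big1. Qed.

Lemma zsum_le_nat f (n : nat) : (forall z, z < 0 -> f z = 0) ->
  zsum_le f n%:Z = \sum_(i < n.+1) f (n%:Z - i%:Z).
Proof.
move=> f_lt0; rewrite /zsum_le; apply: (limn_eventually_cst n.+1) => N nN.
apply: (@big_ord_widen0 (fun i => f (n%:Z - i%:Z))) => // i ni _.
by apply: f_lt0; lia.
Qed.

Lemma zsum_le_lt0 f m : (forall z, z < 0 -> f z = 0) -> m < 0 -> zsum_le f m = 0.
Proof.
move=> f_lt0 m_lt0; rewrite /zsum_le; apply: (limn_eventually_cst 0) => N _.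
by rewrite big1 // => i _; apply: f_lt0; lia.
Qed.

Lemma floorBz (x : R) (z : int) : Num.floor (x - z%:~R) = Num.floor x - z.
Proof. by rewrite -mulrNz floorDrz ?intr_int // intrKfloor. Qed.

End IntSums.

Lemma beta_lt0 {R : realType} (Q : int -> int -> R) l z : z < 0 -> beta Q l z = 0.
Proof. by move=> z_lt0; rewrite /beta ifF //; lia. Qed.

Lemma gamma_lt0 {R : realType} {U : int -> R} z : z < 0 -> gamma U z = 0.
Proof. by move=> z_lt0; rewrite /gamma ifF //; lia. Qed.

Section TriangularInversion.
Context {R : realType}.
Context {Q : int -> int -> R}.
Hypothesis Q_le0 : forall l z, z <= 0 -> Q l z = 0.
Hypothesis Q_gt : forall l z, l < z -> Q l z = 0.

Lemma dstar_lt j l z : z < j%:Z -> dstar Q j l z = 0.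
Proof.
elim: j l z => [|j IH] l z zj /=; first by rewrite /kdelta ifF //; lia.
apply: zsum_eq0 => z1; have [z1_le0|z1_gt0] := lerP z1 0.
  by rewrite Q_le0 // mul0r.
by rewrite IH ?mulr0 //; lia.
Qed.

Lemma dstarS_nat j (n : nat) z :
  dstar Q j.+1 n%:Z z =
  \sum_(i < n.+1) Q n%:Z i%:Z * dstar Q j (n%:Z - i%:Z) (z - i%:Z).
Proof.
apply: zsum_finsupp => z1 z1_lt; first by rewrite Q_le0 ?mul0r //; lia.
by rewrite Q_gt ?mul0r.
Qed.

Lemma beta_ord l z (N : nat) : z < N%:Z ->
  beta Q l z = \sum_(j < N) dstar Q j l z.
Proof.
move=> zN; rewrite /beta; case: ifP => z_ge0.
  symmetry; apply: (@big_ord_widen0 _ (fun j => dstar Q j l z)); first lia.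
  by move=> i zi _; apply: dstar_lt; lia.
by rewrite big1 // => j _; apply: dstar_lt; lia.
Qed.

Lemma beta_rec (n : nat) z : beta Q n%:Z z =
  kdelta R z + \sum_(i < n.+1) Q n%:Z i%:Z * beta Q (n%:Z - i%:Z) (z - i%:Z).
Proof.
rewrite (@beta_ord _ _ (absz z).+2); last by lia.
rewrite big_ord_recl; congr (_ + _).
under eq_bigr => j _ do rewrite -[nat_of_ord (lift ord0 j)]/j.+1 dstarS_nat.
rewrite exchange_big /=; apply: eq_bigr => i _; rewrite -mulr_sumr.
by rewrite (@beta_ord _ _ (absz z).+1) //; lia.
Qed.

Lemma triangular_inversion (p y : int -> R) :
  (forall l, l < 0 -> y l = 0) ->
  (forall n : nat, p n%:Z = y n%:Z + \sum_(i < n.+1) Q n%:Z i%:Z * p (n%:Z - i%:Z)) ->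
  forall n : nat, p n%:Z = \sum_(k < n.+1) y (n%:Z - k%:Z) * beta Q n%:Z k%:Z.
Proof.
move=> y_lt0 p_rec; elim/ltn_ind => n IH.
under eq_bigr do rewrite beta_rec mulrDr.
rewrite big_split /= big_ord_recl /= big1 ?addr0; last first.
  by move=> i _; rewrite /kdelta /= mulr0.
rewrite /kdelta /= mulr1 {1}p_rec; congr (_ + _).
under eq_bigr do rewrite mulr_sumr.
rewrite exchange_big /=; apply: eq_bigr => -[i /= ltin] _.
have [->|i_gt0] := posnP i.
  by rewrite Q_le0 // mul0r big1 // => k _; rewrite mul0r mulr0.
have le_in : (i <= n)%N by lia.
rewrite (subzn le_in) IH ?mulr_sumr; last by lia.
have -> : n.+1 = (i + (n - i).+1)%N by lia.
rewrite [RHS]big_split_ord /= [X in _ = X + _]big1 ?add0r; last first.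
  by move=> k _; rewrite beta_lt0 ?mulr0 //; have := ltn_ord k; lia.
apply: eq_bigr => k _; rewrite mulrCA; congr (_ * (_ * _)).
  by congr y; lia.
by congr beta; lia.
Qed.

Context {U : int -> R}.
Hypothesis U_le0 : forall z, z <= 0 -> U z = 0.
Hypothesis Q_toeplitz : forall k z : nat, (z <= k)%N -> Q k%:Z z%:Z = U z%:Z.

Lemma sstar_lt j z : z < j%:Z -> sstar U j z = 0.
Proof.
elim: j z => [|j IH] z zj /=; first by rewrite /kdelta ifF //; lia.
apply: zsum_eq0 => y; have [zy_le0|zy_gt0] := lerP (z - y) 0.
  by rewrite U_le0 // mul0r.
by rewrite IH ?mulr0 //; lia.
Qed.

Lemma dstar_toeplitz j (k z : nat) :
  (z <= k)%N -> dstar Q j k%:Z z%:Z = sstar U j z%:Z.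
Proof.
elim: j k z => [//|j IH] k z zk.
have -> : sstar U j.+1 z%:Z = \sum_(i < z.+1) U (z%:Z - i%:Z) * sstar U j i%:Z.
  apply: (@zsum_finsupp _ (fun y => U (z%:Z - y) * sstar U j y)) => y y_lt.
    by rewrite sstar_lt ?mulr0 //; lia.
  by rewrite U_le0 ?mul0r //; lia.
rewrite dstarS_nat.
rewrite (@big_ord_widen0 R
  (fun i : nat => Q k%:Z i%:Z * dstar Q j (k%:Z - i%:Z) (z%:Z - i%:Z)) z.+1) //; last first.
  by move=> i zi _; rewrite dstar_lt ?mulr0 //; lia.
rewrite (@sumr_ord_rev R (fun i => U (z%:Z - i%:Z) * sstar U j i%:Z)).
apply: eq_bigr => -[i /= ltiz] _.
have le_iz : (i <= z)%N by lia.
rewrite Q_toeplitz ?(subzn (leq_trans le_iz zk)) ?(subzn le_iz) ?IH; try lia.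
by congr (U _ * _); lia.
Qed.

Lemma beta_toeplitz (k z : nat) : (z <= k)%N -> beta Q k%:Z z%:Z = gamma U z%:Z.
Proof. by move=> zk; apply: eq_bigr => j _; apply: dstar_toeplitz. Qed.

End TriangularInversion.

Section ThetaConv.
Context {R : realType}.
Context {y g : int -> R}.
Hypothesis y_lt0 : forall l, l < 0 -> y l = 0.
Hypothesis g_lt0 : forall z, z < 0 -> g z = 0.

Lemma Theta_conv_floor_lt0 (x : R) : Num.floor x < 0 -> Theta_conv y g x = 0.
Proof.
move=> x_lt0; apply: zsum_eq0 => z; have [z_lt0|z_ge0] := ltrP z 0.
  by rewrite g_lt0 ?mulr0.
by rewrite /Theta floorBz zsum_le_lt0 ?mul0r //; lia.
Qed.

Lemma Theta_conv_cumsum (a : nat -> R) (n : nat) (x : R) :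
  (forall k : nat, a k = \sum_(z < k.+1) y (k%:Z - z%:Z) * g z%:Z) ->
  Num.floor x = n%:Z -> \sum_(k < n.+1) a k = Theta_conv y g x.
Proof.
move=> aE xn; rewrite /Theta_conv (@zsum_finsupp R _ n); first last.
- by move=> z zn; rewrite /Theta floorBz zsum_le_lt0 ?mul0r //; lia.
- by move=> z z_lt0; rewrite g_lt0 ?mulr0.
have aEn (k : 'I_n.+1) : a k = \sum_(z < n.+1) y (k%:Z - z%:Z) * g z%:Z.
  rewrite aE (@big_ord_widen0 R (fun z => y (k%:Z - z%:Z) * g z%:Z) k.+1 n.+1) ?ltn_ord //.
  by move=> i ki _; rewrite y_lt0 ?mul0r //; lia.
under eq_bigr do rewrite aEn.
rewrite exchange_big /=; apply: eq_bigr => -[z /= ltzn] _.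
have le_zn : (z <= n)%N by lia.
rewrite -mulr_suml /Theta floorBz xn (subzn le_zn) zsum_le_nat //; congr (_ * _).
rewrite (@sumr_ord_rev R (fun k => y (k%:Z - z%:Z))).
rewrite (@big_ord_widen0 R (fun k => y ((n - k)%N%:Z - z%:Z)) (n - z).+1); last 2 first.
- lia.
- by move=> i ? ?; rewrite y_lt0 //; lia.
by apply: eq_bigr => k _; congr y; have := ltn_ord k; lia.
Qed.

End ThetaConv.

Section Kernels.
Context {R : realType} {F G : R -> R} {xi zeta : nat -> R} {z0 : R}.

Lemma P_Y_lt0 l : l < 0 -> P_Y F G xi zeta z0 l = 0.
Proof. by move=> l_lt0; rewrite /P_Y ifF //; lia. Qed.

Lemma Peps_plus_gt l z : l < z -> Peps_plus F xi zeta z0 l z = 0.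
Proof.
move=> lz; rewrite /Peps_plus; case: ifP => // l_ge0.
by rewrite /kdelta !ifF ?subrr //; lia.
Qed.

Hypothesis F_gt0 : forall l, 0 < F (z0 + zeta l - xi l).

Lemma Peps_plus_le0 l z : z <= 0 -> Peps_plus F xi zeta z0 l z = 0.
Proof.
move=> z_le0; rewrite /Peps_plus; case: ifP => // l_ge0.
have [->|z_neq0] := eqVneq z 0.
  by rewrite /kdelta eqxx l_ge0 subr0 divff ?subrr ?gt_eqF.
by rewrite /kdelta (negbTE z_neq0) ifF ?subrr //; lia.
Qed.

End Kernels.

Section Atoms.
Context (d : measure_display) (T : measurableType d) (R : realType).
Variable P : probability T R.

Lemma measurable_sublevel {f : T -> R} (r : R) :
  measurable_fun setT f -> measurable [set w | f w <= r].
Proof.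
move=> mf; rewrite -preimage_itvNyc -[_ @^-1` _]setTI.
by apply: mf => //; exact: measurable_itv.
Qed.

Lemma fine_measure_eq0 {A : set T} : measurable A -> fine (P A) = 0 -> P A = 0.
Proof. by move=> mA PA0; rewrite -[P A]fineK ?PA0 // fin_num_measure. Qed.

Variables (X : {RV P >-> R}) (xi : nat -> R).
Hypothesis xi_incr : increasing_seq xi.
Hypothesis X_xi : P (X @^-1` range xi) = 1%E.

Lemma measure_atoms_decomp (A E : set T) (n : nat) :
  measurable A -> measurable E -> P E = 0 ->
  (forall w, A w -> forall k, (n < k)%N -> X w = xi k -> E w) ->
  P A = (\sum_(k < n.+1) P (A `&` [set w | X w = xi k]))%E.
Proof.
move=> mA mE PE0 AE.
have mS : measurable (X @^-1` range xi).
  apply: measurable_funPTI.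
  have -> : range xi = \bigcup_k [set xi k].
    by apply/seteqP; split => [r [k _ <-]|r [k _ ->]]; exists k.
  by apply: bigcupT_measurable => k; exact: measurable_set1.
set F := fun k => A `&` [set w | X w = xi k].
have mF k : measurable (F k).
  by apply: measurableI => //; exact: measurable_funPTI (measurable_set1 _).
set C := \big[setU/set0]_(k < n.+1) F k.
have mC : measurable C by apply: bigsetU_measurable => k _.
have CE : C = \bigcup_(k in `I_n.+1) F k by rewrite /C -bigcup_mkord.
have null : P (~` (X @^-1` range xi) `|` E) = 0.
  apply/eqP; rewrite eq_le measure_ge0 andbT.
  apply: le_trans (measureU2 P (measurableC mS) mE) _.
  change (P (~` (X @^-1` range xi)) + P E <= 0)%E.
  by rewrite (probability_setC P mS) X_xi PE0 subee // adde0.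
have PAC0 : P (A `\` C) = 0.
  apply: (subset_measure0 _ _ _ null); first exact: measurableD.
    by apply: measurableU => //; exact: measurableC.
  move=> w [Aw nCw]; have [[k _ Xk]|] := pselect ((X @^-1` range xi) w); last by left.
  right; apply: (AE w Aw k) => //; rewrite ltnNge; apply/negP => kn.
  by apply: nCw; rewrite CE; exists k => //=; lia.
have CA : C `<=` A by rewrite CE => w [k _ []].
have PA : P A = (P (A `\` C) + P (A `&` C))%E := measureDI P mA mC.
rewrite PA PAC0 add0e (setIidr CA).
apply: (measure_semi_additive_ord_I P (F := F)) => // i j _ _ [w [[_ Xi] [_ Xj]]].
by apply: (increasing_seq_injective xi_incr); rewrite -Xi -Xj.
Qed.

Lemma distF_lt_xi0 (x : R) : x < xi 0 -> distF P X x = 0.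
Proof.
move=> x_lt; have mA := measurable_sublevel x (measurable_funPT X).
rewrite /distF (@measure_atoms_decomp _ _ 0 mA measurable0 (measure0 P)); last first.
  by move=> w /= Xx k _ Xk; move: (xi_incr 0 k); rewrite leq0n -Xk; lra.
rewrite big_ord1 (_ : _ `&` _ = set0) ?measure0 //.
by apply/seteqP; split => w //= [Xx Xw]; move: x_lt; rewrite -Xw; lra.
Qed.

Lemma distF_step (n : nat) (x : R) :
  xi n <= x < xi n.+1 -> distF P X x = \sum_(k < n.+1) atomF P X (xi k).
Proof.
move=> /andP[le_x lt_x]; have mA := measurable_sublevel x (measurable_funPT X).
rewrite /distF (@measure_atoms_decomp _ _ n mA measurable0 (measure0 P)); last first.
  by move=> w /= Xx k nk Xk; move: (xi_incr n.+1 k); rewrite nk -Xk; lra.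
rewrite (eq_bigr (fun k : 'I_n.+1 => (atomF P X (xi k))%:E)) ?sumEFin // => k _.
rewrite /atomF fineK; last first.
  by apply: fin_num_measure; exact: measurable_funPTI (measurable_set1 _).
congr (P _); apply/seteqP; split => w /=; first by case.
move=> Xk; split=> //; rewrite Xk; apply: le_trans le_x.
by rewrite xi_incr; have := ltn_ord k; lia.
Qed.

Variables (eps : {RV P >-> R}) (z0 : R).
Hypothesis X_eps_indep : indep_RV P X eps.
Hypothesis Feps_z0 : distF P eps z0 = 0.

Local Notation Feps := (distF P eps).
Local Notation FY := (distF P (fun w => X w + eps w)).

Lemma distF_sum_atoms (n : nat) (t : R) : t - xi n.+1 <= z0 ->
  FY t = \sum_(k < n.+1) atomF P X (xi k) * Feps (t - xi k).
Proof.
move=> t_le.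
have mE := measurable_sublevel z0 (measurable_funPT eps).
have mA : measurable [set w | X w + eps w <= t].
  apply: measurable_sublevel; apply: measurable_realfun.measurable_funD;
  exact: measurable_funPT.
rewrite /distF (@measure_atoms_decomp _ _ n mA mE (fine_measure_eq0 mE Feps_z0)); last first.
  by move=> w /= Yt k nk Xk; move: (xi_incr n.+1 k); rewrite nk -Xk; lra.
rewrite (eq_bigr (fun k : 'I_n.+1 => (atomF P X (xi k) * Feps (t - xi k))%:E)) ?sumEFin //.
move=> k _; have -> : [set w | X w + eps w <= t] `&` [set w | X w = xi k] =
    X @^-1` [set xi k] `&` eps @^-1` [set e | e <= t - xi k].
  apply/seteqP; split => w /= [Yt Xk]; split=> //; last by rewrite Yt; lra.
  by move: Yt; rewrite Xk; lra.
rewrite X_eps_indep ?EFinM /atomF /distF ?fineK //.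
- by apply: fin_num_measure; exact: measurable_sublevel (measurable_funPT eps).
- by apply: fin_num_measure; exact: measurable_funPTI (measurable_set1 _).
- by rewrite -set_itvNyc; exact: measurable_itv.
Qed.

Section GeneralZeta.
Variable zeta : nat -> R.
Hypothesis zeta_le : forall l, zeta l <= xi l.+1.
Hypothesis Feps_gt0 : forall l, 0 < Feps (z0 + zeta l - xi l).

Lemma p_X_rec (n : nat) :
  p_X (atomF P X) xi n%:Z = P_Y Feps FY xi zeta z0 n%:Z +
  \sum_(i < n.+1) Peps_plus Feps xi zeta z0 n%:Z i%:Z * p_X (atomF P X) xi (n%:Z - i%:Z).
Proof.
set D := Feps (z0 + zeta n - xi n).
have termE (i : 'I_n.+1) :
    Peps_plus Feps xi zeta z0 n%:Z i%:Z * p_X (atomF P X) xi (n%:Z - i%:Z) =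
    kdelta R i%:Z * atomF P X (xi (n - i)%N)
    - Feps (z0 + zeta n - xi (n - i)%N) / D * atomF P X (xi (n - i)%N).
  have le_in : (i <= n)%N by have := ltn_ord i; lia.
  rewrite /Peps_plus /p_X (subzn le_in) /= -mulrBl; congr (_ * _).
  by rewrite ifT //; apply/andP; split => //; rewrite lez_nat.
under eq_bigr do rewrite termE.
rewrite sumrB big_ord_recl /kdelta /= mul1r big1 ?addr0; last by move=> i _; rewrite mul0r.
have t_le : z0 + zeta n - xi n.+1 <= z0 by have := zeta_le n; lra.
rewrite subn0 /p_X /= /P_Y /= -/D (distF_sum_atoms _ _ t_le) mulr_suml.
rewrite (@sumr_ord_rev R (fun k => atomF P X (xi k) * Feps (z0 + zeta n - xi k) / D)).
under [X in _ = _ + (_ - X)]eq_bigr do rewrite mulrAC -(mulrC (atomF P X _)).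
by rewrite addrCA subrr addr0.
Qed.

Lemma p_X_deconvolution (l : int) :
  p_X (atomF P X) xi l =
  zsum (fun z => P_Y Feps FY xi zeta z0 (l - z) * beta (Peps_plus Feps xi zeta z0) l z).
Proof.
have [l_lt0|l_ge0] := ltrP l 0.
  rewrite /p_X ifF; last by lia.
  symmetry; apply: zsum_eq0 => z; have [z_lt0|z_ge0] := ltrP z 0.
    by rewrite beta_lt0 ?mulr0.
  by rewrite P_Y_lt0 ?mul0r //; lia.
have [n ->] : exists n : nat, l = n%:Z by exists (absz l); lia.
rewrite (@zsum_finsupp R _ n); first last.
- by move=> z zn; rewrite P_Y_lt0 ?mul0r //; lia.
- by move=> z z_lt0; rewrite beta_lt0 ?mulr0.
exact: (triangular_inversion (Peps_plus_le0 Feps_gt0) Peps_plus_gt _ _ P_Y_lt0 p_X_rec).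
Qed.

End GeneralZeta.

Section Lattice.
Variables s sigma : R.
Hypothesis s_gt0 : 0 < s.
Hypothesis sigma_le_s : sigma <= s.
Hypothesis xi_lattice : forall l, xi l = xi 0 + s * l%:R.
Hypothesis Feps_sigma : 0 < Feps (z0 + sigma).

Local Notation zeta := (fun l : nat => xi 0 + sigma + s * l%:R).
Local Notation U := (U_eps_plus Feps xi zeta z0).

Lemma lattice_shift l : z0 + zeta l - xi l = z0 + sigma.
Proof. by rewrite (xi_lattice l); ring. Qed.

Lemma lattice_zeta_le l : zeta l <= xi l.+1.
Proof.
by rewrite /= (xi_lattice l.+1) -addn1 natrD mulrDr mulr1 -addrA lerD2l addrC lerD2l.
Qed.

Lemma lattice_Feps_gt0 l : 0 < Feps (z0 + zeta l - xi l).
Proof. by rewrite lattice_shift. Qed.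

Lemma Peps_plus_lattice (k z : nat) : (z <= k)%N ->
  Peps_plus Feps xi zeta z0 k%:Z z%:Z = U z%:Z.
Proof.
move=> zk; rewrite /U_eps_plus /Peps_plus /= subrr /= (subzn zk) /= !lattice_shift.
rewrite lexx !ifT //; congr (_ - Feps _ / _).
by rewrite (xi_lattice (k - z)%N) natrB //; ring.
Qed.

Lemma atomF_lattice (k : nat) :
  atomF P X (xi k) = \sum_(z < k.+1) P_Y Feps FY xi zeta z0 (k%:Z - z%:Z) * gamma U z%:Z.
Proof.
have := @p_X_deconvolution _ lattice_zeta_le lattice_Feps_gt0 k; rewrite /p_X /= => ->.
rewrite (@zsum_finsupp R _ k); first last.
- by move=> z zk; rewrite P_Y_lt0 ?mul0r //; lia.
- by move=> z z_lt0; rewrite beta_lt0 ?mulr0.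
apply: eq_bigr => -[z /= ltzk] _; congr (_ * _).
have Q_le0 := Peps_plus_le0 lattice_Feps_gt0.
have U_le0 z' : z' <= 0 -> U z' = 0 by exact: Q_le0.
by rewrite (beta_toeplitz Q_le0 Peps_plus_gt U_le0 Peps_plus_lattice _ _ (ltnSE ltzk)).
Qed.

Lemma distF_lattice (x : R) :
  distF P X x = Theta_conv (P_Y Feps FY xi zeta z0) (gamma U) ((x - xi 0) / s).
Proof.
have [u_lt0|u_ge0] := ltrP (Num.floor ((x - xi 0) / s)) 0.
  rewrite Theta_conv_floor_lt0 //; [|exact: P_Y_lt0|exact: gamma_lt0].
  by apply: distF_lt_xi0; move: u_lt0; rewrite floor_lt0 ltr_pdivrMr // mul0r; lra.
have [n un] : exists n : nat, Num.floor ((x - xi 0) / s) = n%:Z.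
  by exists (absz (Num.floor ((x - xi 0) / s))); lia.
rewrite -(Theta_conv_cumsum P_Y_lt0 gamma_lt0 _ _ _ atomF_lattice un).
apply: distF_step; have := floor_le ((x - xi 0) / s); have := floorD1_gt ((x - xi 0) / s).
rewrite un intrD ltr_pdivrMr // ler_pdivlMr // (xi_lattice n) (xi_lattice n.+1).
by rewrite -addn1 natrD /=; lra.
Qed.

End Lattice.

End Atoms.

Theorem corollary3 (d : measure_display) (T : measurableType d) (R : realType)
    (P : probability T R) (X eps : {RV P >-> R}) (xi : nat -> R) (z0 : R) :
  indep_RV P X eps ->
  (forall l, xi l < xi l.+1) ->
  P (X @^-1` range xi) = 1%E ->
  0 < atomF P X (xi 0) ->
  distF P eps z0 = 0 ->
  let Y := fun w => X w + eps w in
  (forall zeta : nat -> R,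
     (forall l, xi l < zeta l <= xi l.+1) ->
     (forall l, 0 < distF P eps (z0 + zeta l - xi l)) ->
     forall l : int,
       p_X (atomF P X) xi l =
       zsum (fun z => P_Y (distF P eps) (distF P Y) xi zeta z0 (l - z) *
                      beta (Peps_plus (distF P eps) xi zeta z0) l z)) /\
  (forall s sigma : R,
     0 < s -> 0 < sigma <= s ->
     (forall l, xi l = xi 0 + s * l%:R) ->
     0 < distF P eps (z0 + sigma) ->
     let zeta := fun l : nat => xi 0 + sigma + s * l%:R in
     forall x : R,
       distF P X x =
       Theta_conv (P_Y (distF P eps) (distF P Y) xi zeta z0)
                  (gamma (U_eps_plus (distF P eps) xi zeta z0))
                  ((x - xi 0) / s)).
Proof.
move=> X_eps_indep /increasing_seqP xi_incr X_xi _ Feps_z0 Y; split.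
  move=> zeta zeta_bd Feps_gt0 l.
  by apply: p_X_deconvolution => // k; case/andP: (zeta_bd k).
move=> s sigma s_gt0 /andP[_ sigma_le_s] xi_lattice Feps_sigma zeta x.
exact: distF_lattice.
Qed.
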